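(* Let $N\ge2$, $\rho\in[0,1)$, $f<0$, $g<0$, and $\nu\in i\mathbb{R}$. Suppose the leader moves as $z_0(t)=e^{\nu t}$, so that $\Gamma_0(t)=g_0(\nu)e^{\nu t}$ with $g_0(\nu)=-(1-\rho)(f+g\nu)e_2$. Then $\nu$ is not an eigenvalue of $M$, and every solution $z(t)$ of $\dot z=Mz+\Gamma_0(t)$ satisfies $z(t)-a(\nu)e^{\nu t}\to0$ as $t\to\infty$, where $a(\nu)=-(M-\nu I)^{-1}g_0(\nu)$. In particular $z_k(t)-a_k(\nu)e^{\nu t}\to0$ for each $1\le k\le N$, where $a_k(\nu)$ is the $(2k-1)$-th entry of $a(\nu)$.
   Context: Model: agents $0,\dots,N$ on the line with deviations $z_k(t)$; leader trajectory $z_0$ prescribed; for $1\le i\le N-1$, $\ddot z_i=f\{z_i-(1-\rho)z_{i-1}-\rho z_{i+1}\}+g\{\dot z_i-(1-\rho)\dot z_{i-1}-\rho\dot z_{i+1}\}$, and $\ddot z_N=f\{z_N-z_{N-1}\}+g\{\dot z_N-\dot z_{N-1}\}$. In first-order form with $z=(z_1,\dot z_1,\dots,z_N,\dot z_N)^T\in\mathbb{C}^{2N}$: $\dot z=Mz+\Gamma_0(t)$, $M=I_N\otimes A+P\otimes K$, $A=\begin{pmatrix}0&1\\0&0\end{pmatrix}$, $K=\begin{pmatrix}0&0\\ f&g\end{pmatrix}$, $P=I_N-Q_\rho$ with $Q_\rho$ the $N\times N$ matrix with zero diagonal, $(Q_\rho)_{i,i+1}=\rho$ ($1\le i\le N-1$),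 $(Q_\rho)_{i,i-1}=1-\rho$ ($2\le i\le N-1$), $(Q_\rho)_{N,N-1}=1$, other entries $0$; $\Gamma_0(t)=-(1-\rho)(fz_0(t)+g\dot z_0(t))e_2$, $e_2$ the second standard basis vector of $\mathbb{C}^{2N}$. *)

From Stdlib Require Import Reals Arith.
Open Scope R_scope.

Definition Cx := (R * R)%type.
Definition RtoC (x : R) : Cx := (x, 0).
Definition C0 : Cx := (0, 0).
Definition Cadd (z w : Cx) : Cx := (fst z + fst w, snd z + snd w).
Definition Copp (z : Cx) : Cx := (- fst z, - snd z).
Definition Csub (z w : Cx) : Cx := Cadd z (Copp w).
Definition Cmul (z w : Cx) : Cx :=
  (fst z * fst w - snd z * snd w, fst z * snd w + snd z * fst w).
Definition Cmod (z : Cx) : R := sqrt (fst z ^ 2 + snd z ^ 2).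
Definition Cexp (z : Cx) : Cx := (exp (fst z) * cos (snd z), exp (fst z) * sin (snd z)).

Fixpoint Csum (n : nat) (F : nat -> Cx) : Cx :=
  match n with O => C0 | S m => Cadd (Csum m F) (F m) end.

(* vectors of C^{2N}: entries indexed 0 .. 2N-1; entry 2(k-1) is z_k,
   entry 2(k-1)+1 is dz_k/dt (k = 1..N) *)
Definition cvec := nat -> Cx.

Definition A_entry (a b : nat) : R :=
  if andb (a =? 0)%nat (b =? 1)%nat then 1 else 0.
Definition K_entry (f g : R) (a b : nat) : R :=
  if andb (a =? 1)%nat (b =? 0)%nat then f
  else if andb (a =? 1)%nat (b =? 1)%nat then g else 0.

(* Q_rho with 0-based indices i, j in 0..N-1:
   (Q)_{i,i+1} = rho for 0 <= i <= N-2;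
   (Q)_{i,i-1} = 1 - rho for 1 <= i <= N-2;
   (Q)_{N-1,N-2} = 1; all other entries 0. *)
Definition Q_entry (N : nat) (rho : R) (i j : nat) : R :=
  if andb (j =? i + 1)%nat (j <? N)%nat then rho
  else if andb (i =? j + 1)%nat (i + 1 <? N)%nat then 1 - rho
  else if andb (i + 1 =? N)%nat (i =? j + 1)%nat then 1
  else 0.

Definition P_entry (N : nat) (rho : R) (i j : nat) : R :=
  (if (i =? j)%nat then 1 else 0) - Q_entry N rho i j.

(* M = I_N (x) A + P (x) K, row index r = 2i + a, column index c = 2j + b *)
Definition M_entry (N : nat) (rho f g : R) (r c : nat) : R :=
  let i := (r / 2)%nat in let a := (r mod 2)%nat in
  let j := (c / 2)%nat in let b := (c mod 2)%nat in
  (if (i =? j)%nat then A_entry a b else 0) + P_entry N rho i j * K_entry f g a b.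

Definition Mv (N : nat) (rho f g : R) (v : cvec) : cvec :=
  fun r => Csum (2 * N) (fun c => Cmul (RtoC (M_entry N rho f g r c)) (v c)).

Definition is_eigenvalue (N : nat) (rho f g : R) (nu : Cx) : Prop :=
  exists v : cvec,
    (exists r, (r < 2 * N)%nat /\ v r <> C0) /\
    (forall r, (r < 2 * N)%nat -> Mv N rho f g v r = Cmul nu (v r)).

(* e_2: second standard basis vector (0-based index 1) *)
Definition e2 : cvec := fun r => if (r =? 1)%nat then RtoC 1 else C0.

Definition g0 (rho f g : R) (nu : Cx) : cvec :=
  fun r => Cmul (RtoC (- (1 - rho))) (Cmul (Cadd (RtoC f) (Cmul (RtoC g) nu)) (e2 r)).

Definition Gamma0 (rho f g : R) (nu : Cx) (t : R) : cvec :=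
  fun r => Cmul (g0 rho f g nu r) (Cexp (Cmul (RtoC t) nu)).

Definition is_solution (N : nat) (rho f g : R) (nu : Cx) (z : R -> cvec) : Prop :=
  forall r, (r < 2 * N)%nat -> forall t : R,
    derivable_pt_lim (fun s => fst (z s r)) t
      (fst (Cadd (Mv N rho f g (z t) r) (Gamma0 rho f g nu t r))) /\
    derivable_pt_lim (fun s => snd (z s r)) t
      (snd (Cadd (Mv N rho f g (z t) r) (Gamma0 rho f g nu t r))).

From Stdlib Require Import Reals Lra Lia Psatz.
Open Scope R_scope.

(* Split a vector of C^{2N} into positions [p] and velocities [q], so that [z' = M z] reads
   [p' = q], [q' = f P p + g P q].  For [rho > 0] the weights [w_i = beta^i],
   [beta = rho / (1 - rho)] (last one adjusted), make [diag(w) P] symmetric and positive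
   definite, and [-f <p, P p>_w + |q|_w^2 + eps (<p, q>_w - g/2 <p, P p>_w)] is a strict
   Lyapunov function for small [eps].  For [rho = 0], [P] is lower bidiagonal and the system
   is a cascade of damped oscillators, each forced by its predecessor.  Either way every
   solution of the homogeneous system tends to 0.  The same weighted pairing shows that
   [(f + g nu) P x = nu^2 x] has no nonzero solution for imaginary [nu], so [nu] is not an
   eigenvalue; [a(nu)] is obtained by solving the tridiagonal system from the last agent
   upwards, and [z - a(nu) e^(nu t)] solves the homogeneous system. *)

Fixpoint rsum (n : nat) (F : nat -> R) : R :=
  match n with O => 0 | S m => rsum m F + F m end.

Lemma rsum_ext n F G : (forall i, (i < n)%nat -> F i = G i) -> rsum n F = rsum n G.
Proof.
  induction n as [|n IH]; intros H; simpl; [reflexivity|].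
  rewrite IH by (intros; apply H; lia). rewrite H by lia. reflexivity.
Qed.

Lemma rsum_plus n F G : rsum n (fun i => F i + G i) = rsum n F + rsum n G.
Proof. induction n; simpl; [ring | rewrite IHn; ring]. Qed.

Lemma rsum_minus n F G : rsum n (fun i => F i - G i) = rsum n F - rsum n G.
Proof. induction n; simpl; [ring | rewrite IHn; ring]. Qed.

Lemma rsum_scal_l n a F : rsum n (fun i => a * F i) = a * rsum n F.
Proof. induction n; simpl; [ring | rewrite IHn; ring]. Qed.

Lemma rsum_scal_r n a F : rsum n (fun i => F i * a) = rsum n F * a.
Proof. induction n; simpl; [ring | rewrite IHn; ring]. Qed.

Lemma rsum_delta n k X :
  rsum n (fun i => if (i =? k)%nat then X else 0) = if (k <? n)%nat then X else 0.
Proof.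
  induction n as [|n IH]; simpl; [now destruct k|].
  rewrite IH. destruct (Nat.eqb_spec n k), (Nat.ltb_spec k n), (Nat.ltb_spec k (S n));
    try lia; ring.
Qed.

Lemma rsum_pairs n F :
  rsum (2 * n) F = rsum n (fun j => F (2 * j)%nat + F (2 * j + 1)%nat).
Proof.
  induction n as [|n IH]; [reflexivity|].
  replace (2 * S n)%nat with (S (S (2 * n))) by lia. cbn [rsum]. rewrite IH.
  replace (2 * n + 1)%nat with (S (2 * n)) by lia. ring.
Qed.

Lemma rsum_nonneg n F : (forall i, (i < n)%nat -> 0 <= F i) -> 0 <= rsum n F.
Proof.
  intros H. induction n as [|n IH]; simpl; [lra|].
  pose proof (H n ltac:(lia)). pose proof (IH ltac:(intros; apply H; lia)). lra.
Qed.

Lemma rsum_ge_term n F k :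
  (forall i, (i < n)%nat -> 0 <= F i) -> (k < n)%nat -> F k <= rsum n F.
Proof.
  intros H. induction n as [|n IH]; intros Hk; simpl; [lia|].
  assert (Hpos : 0 <= rsum n F) by (apply rsum_nonneg; intros; apply H; lia).
  destruct (Nat.eq_dec k n) as [->|Hne].
  - lra.
  - pose proof (IH ltac:(intros; apply H; lia) ltac:(lia)). pose proof (H n ltac:(lia)). lra.
Qed.


Definition C1 : Cx := (1, 0).
Definition Cinv (z : Cx) : Cx :=
  (fst z / (fst z * fst z + snd z * snd z), - snd z / (fst z * fst z + snd z * snd z)).
Definition Cdiv (z w : Cx) : Cx := Cmul z (Cinv w).

Lemma Cx_eq (z w : Cx) : fst z = fst w -> snd z = snd w -> z = w.
Proof. destruct z, w; simpl; intros -> ->; reflexivity. Qed.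

Lemma Cx_ring : ring_theory C0 C1 Cadd Cmul Csub Copp (@eq Cx).
Proof. constructor; intros; apply Cx_eq; simpl; ring. Qed.

Lemma C1_neq_C0 : C1 <> C0.
Proof. intros H. injection H. lra. Qed.

Lemma Cx_field : field_theory C0 C1 Cadd Cmul Csub Copp Cdiv Cinv (@eq Cx).
Proof.
  constructor; [exact Cx_ring | exact C1_neq_C0 | reflexivity |].
  intros [a b] Hz. assert (a * a + b * b <> 0).
  { intros E. apply Hz. assert (a = 0) by nra. assert (b = 0) by nra. subst. reflexivity. }
  apply Cx_eq; simpl; field; auto.
Qed.

Add Field Cx_field_inst : Cx_field.

Lemma fst_Csub z w : fst (Csub z w) = fst z - fst w.
Proof. reflexivity. Qed.

Lemma snd_Csub z w : snd (Csub z w) = snd z - snd w.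
Proof. reflexivity. Qed.

Lemma RtoC_neq0 a : a <> 0 -> RtoC a <> C0.
Proof. intros H E. apply H. exact (f_equal fst E). Qed.

Lemma fst_Csum n F : fst (Csum n F) = rsum n (fun c => fst (F c)).
Proof. induction n; simpl; congruence. Qed.

Lemma snd_Csum n F : snd (Csum n F) = rsum n (fun c => snd (F c)).
Proof. induction n; simpl; congruence. Qed.

(** * Derivatives and decay *)

Lemma D_plus u v t a b : derivable_pt_lim u t a -> derivable_pt_lim v t b ->
  derivable_pt_lim (fun s => u s + v s) t (a + b).
Proof. apply derivable_pt_lim_plus. Qed.

Lemma D_minus u v t a b : derivable_pt_lim u t a -> derivable_pt_lim v t b ->
  derivable_pt_lim (fun s => u s - v s) t (a - b).
Proof. apply derivable_pt_lim_minus. Qed.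

Lemma D_mult u v t a b : derivable_pt_lim u t a -> derivable_pt_lim v t b ->
  derivable_pt_lim (fun s => u s * v s) t (a * v t + u t * b).
Proof. apply derivable_pt_lim_mult. Qed.

Lemma D_scal c u t a : derivable_pt_lim u t a ->
  derivable_pt_lim (fun s => c * u s) t (c * a).
Proof. apply derivable_pt_lim_scal. Qed.

Lemma D_eq u t a b : a = b -> derivable_pt_lim u t a -> derivable_pt_lim u t b.
Proof. intros ->; auto. Qed.

Lemma D_rsum n (F : nat -> R -> R) (F' : nat -> R) t :
  (forall i, (i < n)%nat -> derivable_pt_lim (F i) t (F' i)) ->
  derivable_pt_lim (fun s => rsum n (fun i => F i s)) t (rsum n F').
Proof.
  induction n; intros H; simpl.
  - apply derivable_pt_lim_const.
  - apply D_plus; [apply IHn; intros|]; apply H; lia.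
Qed.

Lemma D_comp_scal (F F' : R -> R) c t :
  derivable_pt_lim F (c * t) (F' (c * t)) ->
  derivable_pt_lim (fun s => F (c * s)) t (c * F' (c * t)).
Proof.
  intros HF. apply D_eq with (F' (c * t) * c); [ring|].
  apply (derivable_pt_lim_comp (fun s => c * s) F t c); auto.
  apply D_eq with (c * 1); [ring|]. apply D_scal, derivable_pt_lim_id.
Qed.

Definition tends0 (u : R -> R) : Prop :=
  forall eps, eps > 0 -> exists T, forall t, t >= T -> Rabs (u t) < eps.

Lemma tends0_lin a b u v : tends0 u -> tends0 v -> tends0 (fun t => a * u t + b * v t).
Proof.
  intros Hu Hv eps He.
  set (K := Rabs a + Rabs b + 1).
  assert (HK : K > 0) by (pose proof (Rabs_pos a); pose proof (Rabs_pos b); unfold K; lra).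
  destruct (Hu (eps / K)) as [T1 H1]; [apply Rdiv_lt_0_compat; lra|].
  destruct (Hv (eps / K)) as [T2 H2]; [apply Rdiv_lt_0_compat; lra|].
  exists (Rmax T1 T2). intros t Ht.
  pose proof (H1 t ltac:(pose proof (Rmax_l T1 T2); lra)).
  pose proof (H2 t ltac:(pose proof (Rmax_r T1 T2); lra)).
  eapply Rle_lt_trans; [apply Rabs_triang|]. rewrite !Rabs_mult.
  pose proof (Rabs_pos a); pose proof (Rabs_pos b).
  assert (Rabs a * Rabs (u t) + Rabs b * Rabs (v t) <= (Rabs a + Rabs b) * (eps / K)) by nra.
  assert ((Rabs a + Rabs b) * (eps / K) < K * (eps / K)).
  { apply Rmult_lt_compat_r; [apply Rdiv_lt_0_compat|unfold K]; lra. }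
  replace (K * (eps / K)) with eps in * by (field; lra). lra.
Qed.

Lemma tends0_zero : tends0 (fun _ => 0).
Proof. intros eps He. exists 0. intros. rewrite Rabs_R0. lra. Qed.

Lemma tends0_sq_div h c : c > 0 -> tends0 h -> tends0 (fun t => h t * h t / c).
Proof.
  intros Hc Hh eps He. destruct (Hh (Rmin 1 (eps * c))) as [T HT].
  { apply Rmin_pos; [lra | apply Rmult_lt_0_compat; lra]. }
  exists T. intros t Ht. specialize (HT t Ht).
  pose proof (Rmin_l 1 (eps * c)). pose proof (Rmin_r 1 (eps * c)). pose proof (Rabs_pos (h t)).
  assert (Habs : Rabs (h t * h t / c) = Rabs (h t) * Rabs (h t) / c).
  { unfold Rdiv. rewrite !Rabs_mult, Rabs_inv, (Rabs_pos_eq c) by lra. reflexivity. }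
  rewrite Habs. apply Rmult_lt_reg_r with c; [lra|].
  unfold Rdiv. rewrite Rmult_assoc, Rinv_l, Rmult_1_r by lra. nra.
Qed.

Lemma nonincreasing_after (W W' : R -> R) (T : R) :
  (forall s, derivable_pt_lim W s (W' s)) -> (forall s, s > T -> W' s <= 0) ->
  forall t, t > T -> W t <= W T.
Proof.
  intros HW Hneg t Ht. destruct (MVT_cor2 W W' T t Ht (fun s _ => HW s)) as [s [Hs Hrange]].
  pose proof (Hneg s ltac:(lra)). nra.
Qed.

(* [(V s - eta/2) e^(c s)] is nonincreasing once the forcing [k] stays below [c eta / 2];
   its exponential weight then forces [V] below [eta]. *)
Lemma lyapunov_decay (V D k : R -> R) (c : R) : c > 0 ->
  (forall t, derivable_pt_lim V t (D t)) -> (forall t, 0 <= V t) ->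
  (forall t, D t <= - c * V t + k t) ->
  tends0 k -> forall eta, eta > 0 -> exists T, forall t, t >= T -> V t < eta.
Proof.
  intros Hc HD HV HDV Hk eta Heta.
  destruct (Hk (c * eta / 2)) as [T1 HT1]; [nra|].
  assert (HkT1 : forall t, t >= T1 -> k t <= c * eta / 2)
    by (intros t Ht; pose proof (Rle_abs (k t)); pose proof (HT1 t Ht); lra).
  set (W := fun s => (V s - eta / 2) * exp (c * s)).
  assert (Hdecr : forall t, t > T1 -> W t <= W T1).
  { apply (nonincreasing_after W
      (fun s => (D s - 0) * exp (c * s) + (V s - eta / 2) * (c * exp (c * s)))).
    - intros s. apply (D_mult (fun s => V s - eta / 2) (fun s => exp (c * s))).
      + apply D_minus; [apply HD | apply derivable_pt_lim_const].
      + apply (D_comp_scal exp exp), derivable_pt_lim_exp.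
    - intros s Hs. pose proof (exp_pos (c * s)). pose proof (HDV s).
      pose proof (HkT1 s ltac:(lra)). nra. }
  exists (T1 + 2 * V T1 / (c * eta) + 1). intros t Ht.
  assert (Hgap : 0 <= 2 * V T1 / (c * eta)).
  { pose proof (HV T1). apply Rmult_le_pos; [lra | apply Rlt_le, Rinv_0_lt_compat; nra]. }
  destruct (Rlt_or_le (V t) eta) as [Hlt|Hge]; auto. exfalso.
  pose proof (Hdecr t ltac:(lra)) as Hd. unfold W in Hd.
  replace (exp (c * t)) with (exp (c * (t - T1)) * exp (c * T1)) in Hd
    by (rewrite <- exp_plus; f_equal; ring).
  pose proof (exp_pos (c * T1)).
  assert (Hd' : (V t - eta / 2) * exp (c * (t - T1)) <= V T1 - eta / 2) by nra.
  pose proof (exp_ineq1_le (c * (t - T1))).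
  assert (Hlong : c * (t - T1) > 2 * V T1 / eta).
  { replace (2 * V T1 / eta) with (c * (2 * V T1 / (c * eta))) by (field; lra).
    apply Rmult_lt_compat_l; lra. }
  pose proof (exp_pos (c * (t - T1))).
  assert (eta / 2 * exp (c * (t - T1)) <= (V t - eta / 2) * exp (c * (t - T1)))
    by (apply Rmult_le_compat_r; lra).
  assert (eta / 2 * (2 * V T1 / eta) = V T1) by (field; lra).
  nra.
Qed.

Lemma dissipation_decay (V D S k : R -> R) (m C : R) : m > 0 -> C > 0 ->
  (forall t, derivable_pt_lim V t (D t)) ->
  (forall t, 0 <= V t) -> (forall t, V t <= C * S t) ->
  (forall t, D t <= - m * S t + k t) ->
  tends0 k -> forall eta, eta > 0 -> exists T, forall t, t >= T -> V t < eta.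
Proof.
  intros Hm HC HD HV HVS Hle. apply (lyapunov_decay V D k (m / C)); auto.
  - apply Rdiv_lt_0_compat; lra.
  - intros t. pose proof (Hle t). pose proof (HVS t).
    assert (m / C * V t <= m / C * (C * S t))
      by (apply Rmult_le_compat_l; [apply Rlt_le, Rdiv_lt_0_compat|]; lra).
    replace (m / C * (C * S t)) with (m * S t) in * by (field; lra). lra.
Qed.

Lemma tends0_of_energy (V u : R -> R) (c : R) : c > 0 ->
  (forall t, c * (u t * u t) <= V t) ->
  (forall eta, eta > 0 -> exists T, forall t, t >= T -> V t < eta) -> tends0 u.
Proof.
  intros Hc HV Hd eps He. destruct (Hd (c * (eps * eps))) as [T HT].
  { apply Rmult_lt_0_compat; [|apply Rmult_lt_0_compat]; lra. }
  exists T. intros t Ht. pose proof (HV t). pose proof (HT t Ht).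
  assert (u t * u t < eps * eps) by (apply Rmult_lt_reg_l with c; lra).
  unfold Rabs. destruct (Rcase_abs (u t)); nra.
Qed.

Lemma exists_small_coefficient (a b K : R) : 0 < a -> 0 < b -> 0 < K ->
  exists eps, 0 < eps <= 1 /\ eps * K <= a /\ eps * K <= b.
Proof.
  intros Ha Hb HK. exists (Rmin 1 (Rmin a b / K)).
  assert (Hm : 0 < Rmin a b / K) by (apply Rdiv_lt_0_compat; [apply Rmin_pos|]; auto).
  assert (Hle : Rmin 1 (Rmin a b / K) * K <= Rmin a b).
  { replace (Rmin a b) with (Rmin a b / K * K) at 2 by (field; lra).
    apply Rmult_le_compat_r; [lra | apply Rmin_r]. }
  pose proof (Rmin_l a b). pose proof (Rmin_r a b).
  repeat split; try lra; [apply Rmin_pos; lra | apply Rmin_l].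
Qed.

(** * The block structure of M *)

Definition Pv (N : nat) (rho : R) (y : nat -> R) (i : nat) : R :=
  if (i =? 0)%nat then y 0%nat - rho * y 1%nat
  else if (i + 1 =? N)%nat then y i - y (i - 1)%nat
  else y i - (1 - rho) * y (i - 1)%nat - rho * y (i + 1)%nat.

Definition RMv (N : nat) (rho f g : R) (x : nat -> R) (r : nat) : R :=
  rsum (2 * N) (fun c => M_entry N rho f g r c * x c).

Lemma fst_Mv N rho f g v r : fst (Mv N rho f g v r) = RMv N rho f g (fun c => fst (v c)) r.
Proof. unfold Mv, RMv. rewrite fst_Csum. apply rsum_ext. intros. simpl. ring. Qed.

Lemma snd_Mv N rho f g v r : snd (Mv N rho f g v r) = RMv N rho f g (fun c => snd (v c)) r.
Proof. unfold Mv, RMv. rewrite snd_Csum. apply rsum_ext. intros. simpl. ring. Qed.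

Lemma Q_entry_mul N rho i j y : (i < N)%nat ->
  Q_entry N rho i j * y j =
  (if (j =? i + 1)%nat then (if (i + 1 <? N)%nat then rho * y (i + 1)%nat else 0) else 0) +
  (if (j =? i - 1)%nat then
     (if (1 <=? i)%nat then (if (i + 1 <? N)%nat then 1 - rho else 1) * y (i - 1)%nat else 0)
   else 0).
Proof.
  intros Hi. unfold Q_entry.
  destruct (Nat.eqb_spec j (i + 1)), (Nat.ltb_spec j N), (Nat.eqb_spec i (j + 1)),
    (Nat.ltb_spec (i + 1) N), (Nat.eqb_spec (i + 1) N), (Nat.eqb_spec j (i - 1)),
    (Nat.leb_spec 1 i); simpl; subst; try lia; try ring;
    replace (j + 1 - 1)%nat with j by lia; ring.
Qed.

Lemma P_row_sum N rho i y : (2 <= N)%nat -> (i < N)%nat ->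
  rsum N (fun j => P_entry N rho i j * y j) = Pv N rho y i.
Proof.
  intros HN Hi.
  rewrite (rsum_ext _ _ (fun j => (if (j =? i)%nat then y i else 0) - Q_entry N rho i j * y j)).
  2:{ intros j _. unfold P_entry. destruct (Nat.eqb_spec i j), (Nat.eqb_spec j i);
      subst; try lia; ring. }
  rewrite rsum_minus, (rsum_ext _ _ _ (fun j _ => Q_entry_mul N rho i j y Hi)),
    rsum_plus, !rsum_delta. unfold Pv.
  destruct (Nat.ltb_spec i N), (Nat.ltb_spec (i + 1) N), (Nat.ltb_spec (i - 1) N),
    (Nat.eqb_spec i 0), (Nat.eqb_spec (i + 1) N), (Nat.leb_spec 1 i);
    subst; simpl; try lia; ring.
Qed.

Lemma double_div2 i : ((2 * i) / 2 = i)%nat.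
Proof. rewrite Nat.mul_comm. apply Nat.div_mul. lia. Qed.

Lemma double_mod2 i : ((2 * i) mod 2 = 0)%nat.
Proof. rewrite Nat.mul_comm. apply Nat.Div0.mod_mul. Qed.

Lemma double1_div2 i : ((2 * i + 1) / 2 = i)%nat.
Proof. symmetry. apply (Nat.div_unique _ 2 i 1); lia. Qed.

Lemma double1_mod2 i : ((2 * i + 1) mod 2 = 1)%nat.
Proof. symmetry. apply (Nat.mod_unique _ 2 i 1); lia. Qed.

Lemma RMv_even N rho f g x i : (i < N)%nat ->
  RMv N rho f g x (2 * i)%nat = x (2 * i + 1)%nat.
Proof.
  intros Hi. unfold RMv. rewrite rsum_pairs.
  rewrite (rsum_ext _ _ (fun j => if (j =? i)%nat then x (2 * i + 1)%nat else 0)).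
  - rewrite rsum_delta. destruct (Nat.ltb_spec i N); [reflexivity | lia].
  - intros j _. unfold M_entry.
    rewrite double_div2, double_mod2, double_div2, double_mod2, double1_div2, double1_mod2.
    unfold A_entry, K_entry; simpl.
    destruct (Nat.eqb_spec i j), (Nat.eqb_spec j i); subst; try lia; ring.
Qed.

Lemma RMv_odd N rho f g x i : (2 <= N)%nat -> (i < N)%nat ->
  RMv N rho f g x (2 * i + 1)%nat =
  f * Pv N rho (fun j => x (2 * j)%nat) i + g * Pv N rho (fun j => x (2 * j + 1)%nat) i.
Proof.
  intros HN Hi. unfold RMv. rewrite rsum_pairs, <- !P_row_sum, <- !rsum_scal_l, <- rsum_plus
    by assumption.
  apply rsum_ext. intros j _. unfold M_entry.
  rewrite double1_div2, double1_mod2, double_div2, double_mod2, double1_div2, double1_mod2.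
  unfold A_entry, K_entry; simpl. destruct (i =? j)%nat; ring.
Qed.

Lemma Pv_ext N rho u v i : (2 <= N)%nat -> (i < N)%nat ->
  (forall j, (j < N)%nat -> u j = v j) -> Pv N rho u i = Pv N rho v i.
Proof.
  intros HN Hi H. unfold Pv.
  destruct (Nat.eqb_spec i 0); [|destruct (Nat.eqb_spec (i + 1) N)]; rewrite !H by lia; auto.
Qed.

Lemma Pv_rho0_0 N y : Pv N 0 y 0%nat = y 0%nat.
Proof. unfold Pv. simpl. ring. Qed.

Lemma Pv_rho0_S N y i : Pv N 0 y (S i) = y (S i) - y i.
Proof.
  unfold Pv. simpl. rewrite Nat.sub_0_r. destruct (_ : bool); ring.
Qed.

(** * A symmetrizer for P when rho > 0 *)

Section Symmetrizer.

Variables (N : nat) (rho : R).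
Hypothesis (HN : (2 <= N)%nat) (Hrho : 0 < rho < 1).

Definition beta : R := rho / (1 - rho).

(* [diag(Pweight) * P] is symmetric: [Pweight i * rho = Pweight (i+1) * (1 - rho)] for
   interior rows, and the last row has coefficient 1 instead of [1 - rho]. *)
Definition Pweight (i : nat) : R :=
  if (i + 1 =? N)%nat then rho * beta ^ (N - 2) else beta ^ i.

Definition Pcoef (i : nat) : R := rho * beta ^ i.

Definition wdot (u v : nat -> R) : R := rsum N (fun i => Pweight i * u i * v i).

Definition Pform (u v : nat -> R) : R :=
  (1 - rho) * u 0%nat * v 0%nat +
  rsum (N - 1) (fun i => Pcoef i * (u i - u (i + 1)%nat) * (v i - v (i + 1)%nat)).

Lemma beta_pos : 0 < beta.
Proof. unfold beta. apply Rdiv_lt_0_compat; lra. Qed.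

Lemma Pweight_pos i : 0 < Pweight i.
Proof.
  pose proof beta_pos. unfold Pweight.
  destruct (_ =? _)%nat; [apply Rmult_lt_0_compat; [lra|]|]; apply pow_lt; auto.
Qed.

Lemma Pcoef_pos i : 0 < Pcoef i.
Proof. pose proof beta_pos. apply Rmult_lt_0_compat; [lra | apply pow_lt; auto]. Qed.

Lemma wdot_Pv_prefix u y m : (m + 2 <= N)%nat ->
  rsum (S m) (fun i => Pweight i * u i * Pv N rho y i) =
  (1 - rho) * u 0%nat * y 0%nat +
  rsum m (fun i => Pcoef i * (u i - u (i + 1)%nat) * (y i - y (i + 1)%nat)) +
  Pcoef m * u m * (y m - y (m + 1)%nat).
Proof.
  induction m as [|m IH]; intros Hm.
  - cbn [rsum]. unfold Pweight, Pv, Pcoef. destruct (Nat.eqb_spec (0 + 1) N); [lia|].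
    simpl. ring.
  - change (rsum (S (S m)) ?F) with (rsum (S m) F + F (S m)).
    change (rsum (S m) ?F) with (rsum m F + F m) at 2.
    rewrite IH by lia. unfold Pv, Pweight, Pcoef.
    destruct (Nat.eqb_spec (S m) 0), (Nat.eqb_spec (S m + 1) N); try lia.
    replace (S m - 1)%nat with m by lia. replace (m + 1)%nat with (S m) by lia.
    simpl pow. unfold beta. field. lra.
Qed.

(* Summation by parts. *)
Lemma wdot_Pv u y : wdot u (fun i => Pv N rho y i) = Pform u y.
Proof.
  unfold wdot, Pform. set (m := (N - 2)%nat).
  replace N with (S (S m)) at 1 by lia. replace (N - 1)%nat with (S m) by lia.
  change (rsum (S (S m)) ?F) with (rsum (S m) F + F (S m)).
  rewrite wdot_Pv_prefix by lia. cbn [rsum].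
  unfold Pv, Pweight, Pcoef. destruct (Nat.eqb_spec (S m) 0), (Nat.eqb_spec (S m + 1) N);
    try lia.
  replace (S m - 1)%nat with m by lia. replace (N - 2)%nat with m by lia.
  replace (m + 1)%nat with (S m) by lia. ring.
Qed.

Lemma Pform_sym u v : Pform u v = Pform v u.
Proof. unfold Pform. f_equal; [ring | apply rsum_ext; intros; ring]. Qed.

Lemma wdot_sym u v : wdot u v = wdot v u.
Proof. unfold wdot. apply rsum_ext; intros; ring. Qed.

Lemma wdot_linear_r u a b v y :
  wdot u (fun i => a * v i + b * y i) = a * wdot u v + b * wdot u y.
Proof.
  unfold wdot. rewrite <- !rsum_scal_l, <- rsum_plus. apply rsum_ext; intros; ring.
Qed.

Lemma sq_weighted_nonneg c x : 0 < c -> 0 <= c * x * x.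
Proof. intros Hc. rewrite Rmult_assoc. apply Rmult_le_pos; [lra | apply Rle_0_sqr]. Qed.

Lemma wdot_nonneg u : 0 <= wdot u u.
Proof. apply rsum_nonneg. intros. apply sq_weighted_nonneg, Pweight_pos. Qed.

Lemma wdot_ge_term u k : (k < N)%nat -> Pweight k * u k * u k <= wdot u u.
Proof.
  intros Hk. apply (rsum_ge_term _ (fun i => Pweight i * u i * u i)); auto.
  intros. apply sq_weighted_nonneg, Pweight_pos.
Qed.

Lemma wdot_cauchy u v : 2 * Rabs (wdot u v) <= wdot u u + wdot v v.
Proof.
  assert (H1 : 0 <= wdot u u + wdot v v - 2 * wdot u v).
  { unfold wdot. rewrite <- rsum_scal_l, <- rsum_plus, <- rsum_minus. apply rsum_nonneg.
    intros. replace (_ - _) with (Pweight i * (u i - v i) * (u i - v i)) by ring.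
    apply sq_weighted_nonneg, Pweight_pos. }
  assert (H2 : 0 <= wdot u u + wdot v v + 2 * wdot u v).
  { unfold wdot. rewrite <- rsum_scal_l, <- !rsum_plus. apply rsum_nonneg.
    intros. replace (_ + _) with (Pweight i * (u i + v i) * (u i + v i)) by ring.
    apply sq_weighted_nonneg, Pweight_pos. }
  unfold Rabs. destruct (Rcase_abs _); lra.
Qed.

Lemma Pform_diff_nonneg u :
  0 <= rsum (N - 1) (fun i => Pcoef i * (u i - u (i + 1)%nat) * (u i - u (i + 1)%nat)).
Proof. apply rsum_nonneg. intros. apply sq_weighted_nonneg, Pcoef_pos. Qed.

Lemma Pform_nonneg u : 0 <= Pform u u.
Proof.
  pose proof (Pform_diff_nonneg u). pose proof (sq_weighted_nonneg (1 - rho) (u 0%nat)).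
  unfold Pform. lra.
Qed.

Lemma Pform_coercive k : (k < N)%nat ->
  exists K, K > 0 /\ forall u, u k * u k <= K * Pform u u.
Proof.
  induction k as [|k IH]; intros Hk.
  - exists (/ (1 - rho)). split; [apply Rinv_0_lt_compat; lra|]. intros u.
    pose proof (Pform_diff_nonneg u).
    apply Rmult_le_reg_l with (1 - rho); [lra|].
    replace ((1 - rho) * (/ (1 - rho) * Pform u u)) with (Pform u u) by (field; lra).
    unfold Pform. lra.
  - destruct (IH ltac:(lia)) as [K [HK HKu]]. pose proof (Pcoef_pos k).
    exists (2 * K + 2 / Pcoef k). split.
    { assert (0 < 2 / Pcoef k) by (apply Rdiv_lt_0_compat; lra). lra. }
    intros u. pose proof (HKu u). pose proof (Pform_nonneg u).
    assert (Hd : Pcoef k * (u k - u (S k)) * (u k - u (S k)) <= Pform u u).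
    { pose proof (sq_weighted_nonneg (1 - rho) (u 0%nat)).
      pose proof (rsum_ge_term (N - 1)
        (fun i => Pcoef i * (u i - u (i + 1)%nat) * (u i - u (i + 1)%nat)) k
        ltac:(intros; apply sq_weighted_nonneg, Pcoef_pos) ltac:(lia)).
      cbv beta in *. replace (k + 1)%nat with (S k) in * by lia. unfold Pform. lra. }
    assert (Hd' : (u k - u (S k)) * (u k - u (S k)) <= Pform u u / Pcoef k).
    { apply Rmult_le_reg_l with (Pcoef k); [lra|].
      replace (Pcoef k * (Pform u u / Pcoef k)) with (Pform u u) by (field; lra). lra. }
    pose proof (Rle_0_sqr (u k + (u k - u (S k)))). unfold Rsqr in *.
    replace ((2 * K + 2 / Pcoef k) * Pform u u)
      with (2 * (K * Pform u u) + 2 * (Pform u u / Pcoef k)) by (field; lra).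
    nra.
Qed.

Lemma wdot_le_Pform : exists K, K > 0 /\ forall u, wdot u u <= K * Pform u u.
Proof.
  assert (H : forall n, (n <= N)%nat -> exists K, K > 0 /\
            forall u, rsum n (fun i => Pweight i * u i * u i) <= K * Pform u u).
  { induction n as [|n IH]; intros Hn.
    - exists 1. split; [lra|]. intros u. pose proof (Pform_nonneg u). simpl. lra.
    - destruct (IH ltac:(lia)) as [K [HK HKu]].
      destruct (Pform_coercive n ltac:(lia)) as [K1 [HK1 HK1u]].
      pose proof (Pweight_pos n).
      exists (K + Pweight n * K1). split; [nra|].
      intros u. simpl. pose proof (HKu u). pose proof (HK1u u). nra. }
  exact (H N (le_n N)).
Qed.

Lemma D_Pform (u v : R -> nat -> R) u' v' t :
  (forall i, (i < N)%nat -> derivable_pt_lim (fun s => u s i) t (u' i)) ->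
  (forall i, (i < N)%nat -> derivable_pt_lim (fun s => v s i) t (v' i)) ->
  derivable_pt_lim (fun s => Pform (u s) (v s)) t (Pform u' (v t) + Pform (u t) v').
Proof.
  intros Hu Hv. unfold Pform.
  eapply D_eq; [|apply D_plus].
  3:{ apply (D_rsum (N - 1)
        (fun i s => Pcoef i * (u s i - u s (i + 1)%nat) * (v s i - v s (i + 1)%nat))).
      intros i Hi. apply D_mult; [apply D_scal|]; apply D_minus;
        (apply Hu || apply Hv); lia. }
  2:{ apply D_mult; [apply D_scal|]; (apply Hu || apply Hv); lia. }
  match goal with |- _ + rsum ?n ?F = _ + rsum _ ?G1 + (_ + rsum _ ?G2) =>
    assert (rsum n F = rsum n G1 + rsum n G2)
      by (rewrite <- rsum_plus; apply rsum_ext; intros; ring) end.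
  lra.
Qed.

Lemma D_wdot (u v : R -> nat -> R) u' v' t :
  (forall i, (i < N)%nat -> derivable_pt_lim (fun s => u s i) t (u' i)) ->
  (forall i, (i < N)%nat -> derivable_pt_lim (fun s => v s i) t (v' i)) ->
  derivable_pt_lim (fun s => wdot (u s) (v s)) t (wdot u' (v t) + wdot (u t) v').
Proof.
  intros Hu Hv. unfold wdot.
  eapply D_eq; [|apply (D_rsum N (fun i s => Pweight i * u s i * v s i)
                   (fun i => Pweight i * u' i * v t i + Pweight i * u t i * v' i))].
  - apply rsum_plus.
  - intros i Hi. eapply D_eq; [|apply D_mult; [apply D_scal|]; auto]. cbv beta. ring.
Qed.

End Symmetrizer.

(** * Decay of the homogeneous system *)

Definition homogeneous_solution (N : nat) (rho f g : R) (x : R -> nat -> R) : Prop :=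
  forall r, (r < 2 * N)%nat -> forall t,
    derivable_pt_lim (fun s => x s r) t (RMv N rho f g (x t) r).

Definition oscillator_energy (f g eps a b : R) : R :=
  - f * (a * a) + b * b + eps * (a * b - g / 2 * (a * a)).

Lemma oscillator_energy_lower f g eps a b : f < 0 -> g < 0 -> 0 < eps <= 1 -> eps <= - f ->
  - f / 2 * (a * a) + b * b / 2 <= oscillator_energy f g eps a b.
Proof.
  intros Hf Hg Heps Hef. unfold oscillator_energy.
  pose proof (Rle_0_sqr a). pose proof (Rle_0_sqr b). pose proof (Rle_0_sqr (a + b)).
  unfold Rsqr in *.
  assert (0 <= eps * ((a + b) * (a + b))) by (apply Rmult_le_pos; lra).
  assert (0 <= - eps * g / 2 * (a * a)) by (apply Rmult_le_pos; nra).
  assert (0 <= (- f / 2 - eps / 2) * (a * a)) by (apply Rmult_le_pos; lra).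
  assert (0 <= (1 / 2 - eps / 2) * (b * b)) by (apply Rmult_le_pos; lra).
  lra.
Qed.

Lemma oscillator_energy_upper f g eps a b : f < 0 -> g < 0 -> 0 < eps <= 1 ->
  oscillator_energy f g eps a b <= (- f - g + 2) * (a * a + b * b).
Proof.
  intros Hf Hg Heps. unfold oscillator_energy.
  pose proof (Rle_0_sqr a). pose proof (Rle_0_sqr b). pose proof (Rle_0_sqr (a - b)).
  unfold Rsqr in *.
  assert (0 <= eps * ((a - b) * (a - b))) by (apply Rmult_le_pos; lra).
  assert (- eps * g / 2 * (a * a) <= - g / 2 * (a * a)) by (apply Rmult_le_compat_r; nra).
  assert (0 <= - g * (b * b)) by (apply Rmult_le_pos; lra).
  assert (0 <= - f * (b * b)) by (apply Rmult_le_pos; lra).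
  assert (0 <= - g * (a * a)) by (apply Rmult_le_pos; lra).
  assert (eps * (a * a) <= 1 * (a * a)) by (apply Rmult_le_compat_r; lra).
  assert (eps * (b * b) <= 1 * (b * b)) by (apply Rmult_le_compat_r; lra).
  nra.
Qed.

(* The derivative of [oscillator_energy] along [a' = b], [b' = f a + g b - h]. *)
Lemma oscillator_dissipation f g eps del a b h :
  f < 0 -> g < 0 -> 0 < eps <= 1 -> eps <= - g / 2 ->
  0 < del -> del <= - g / 16 -> del <= - f / 4 ->
  2 * g * (b * b) - 2 * b * h + eps * (b * b) + eps * f * (a * a) - eps * a * h
  <= - Rmin (- g) (- eps * f / 2) * (a * a + b * b) + h * h / (4 * del).
Proof.
  intros Hf Hg Heps Heg Hd Hdg Hdf.
  pose proof (Rle_0_sqr a). pose proof (Rle_0_sqr b). unfold Rsqr in *.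
  set (z := 2 * b + eps * a).
  assert (Hz : - z * h <= del * (z * z) + h * h / (4 * del)).
  { apply Rmult_le_reg_l with (4 * del); [lra|].
    replace (4 * del * (del * (z * z) + h * h / (4 * del)))
      with (4 * del * del * (z * z) + h * h) by (field; lra).
    pose proof (Rle_0_sqr (2 * del * z + h)). unfold Rsqr in *. lra. }
  assert (Hzz : z * z <= 8 * (b * b) + 2 * (eps * eps) * (a * a)).
  { pose proof (Rle_0_sqr (2 * b - eps * a)). unfold z, Rsqr in *. lra. }
  assert (del * (z * z) <= del * (8 * (b * b) + 2 * (eps * eps) * (a * a)))
    by (apply Rmult_le_compat_l; lra).
  assert (del * 2 * (eps * eps) <= - eps * f / 2).
  { assert (del * 2 * eps <= - f / 2) by nra.
    replace (del * 2 * (eps * eps)) with (del * 2 * eps * eps) by ring.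
    replace (- eps * f / 2) with (- f / 2 * eps) by field.
    apply Rmult_le_compat_r; lra. }
  set (m := Rmin (- g) (- eps * f / 2)).
  assert (m <= - g) by apply Rmin_l. assert (m <= - eps * f / 2) by apply Rmin_r.
  assert (0 <= (- g / 2 - del * 8) * (b * b)) by (apply Rmult_le_pos; lra).
  assert (0 <= (- eps * f / 2 - del * 2 * (eps * eps)) * (a * a))
    by (apply Rmult_le_pos; lra).
  assert (0 <= (- g / 2 - eps) * (b * b)) by (apply Rmult_le_pos; lra).
  assert (0 <= (- g - m) * (b * b)) by (apply Rmult_le_pos; lra).
  assert (0 <= (- eps * f / 2 - m) * (a * a)) by (apply Rmult_le_pos; lra).
  assert (2 * g * (b * b) - 2 * b * h + eps * (b * b) + eps * f * (a * a) - eps * a * h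
          = 2 * g * (b * b) + eps * (b * b) + eps * f * (a * a) - z * h) by (unfold z; ring).
  lra.
Qed.

Lemma damped_oscillator_decay (f g : R) (p q h : R -> R) : f < 0 -> g < 0 ->
  (forall t, derivable_pt_lim p t (q t)) ->
  (forall t, derivable_pt_lim q t (f * p t + g * q t - h t)) ->
  tends0 h -> tends0 p /\ tends0 q.
Proof.
  intros Hf Hg Hp Hq Hh.
  destruct (exists_small_coefficient (- f) (- g / 2) 1) as [eps [Heps [Hef Heg]]]; try lra.
  destruct (exists_small_coefficient (- g / 16) (- f / 4) 1) as [del [Hd [Hdg Hdf]]]; try lra.
  set (V := fun t => oscillator_energy f g eps (p t) (q t)).
  assert (Hlow : forall t, - f / 2 * (p t * p t) + q t * q t / 2 <= V t)
    by (intros; apply oscillator_energy_lower; lra).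
  assert (HV0 : forall t, 0 <= V t).
  { intros t. pose proof (Hlow t). pose proof (Rle_0_sqr (p t)).
    pose proof (Rle_0_sqr (q t)). unfold Rsqr in *. nra. }
  assert (Hdecay : forall eta, eta > 0 -> exists T, forall t, t >= T -> V t < eta).
  { apply (dissipation_decay V
      (fun t => 2 * g * (q t * q t) - 2 * q t * h t + eps * (q t * q t)
                + eps * f * (p t * p t) - eps * p t * h t)
      (fun t => p t * p t + q t * q t) (fun t => h t * h t / (4 * del))
      (Rmin (- g) (- eps * f / 2)) (- f - g + 2)); auto.
    - apply Rmin_pos; nra.
    - lra.
    - intros t. unfold V, oscillator_energy.
      eapply D_eq; [|apply D_plus; [apply D_plus|apply D_scal, D_minus]].
      4:{ apply D_mult; apply Hp || apply Hq. }
      4:{ apply D_scal, D_mult; apply Hp. }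
      2:{ apply D_scal, D_mult; apply Hp. }
      2:{ apply D_mult; apply Hq. }
      cbv beta. field.
    - intros t. apply oscillator_energy_upper; lra.
    - intros t. apply oscillator_dissipation; lra.
    - apply tends0_sq_div; auto. lra. }
  split.
  - apply (tends0_of_energy V p (- f / 2)); [lra| |exact Hdecay].
    intros t. pose proof (Hlow t). pose proof (Rle_0_sqr (q t)). unfold Rsqr in *. lra.
  - apply (tends0_of_energy V q (1 / 2)); [lra| |exact Hdecay].
    intros t. pose proof (Hlow t). pose proof (Rle_0_sqr (p t)). unfold Rsqr in *. nra.
Qed.

Definition positions (x : R -> nat -> R) (s : R) (i : nat) : R := x s (2 * i)%nat.
Definition velocities (x : R -> nat -> R) (s : R) (i : nat) : R := x s (2 * i + 1)%nat.

Lemma D_positions N rho f g x t i : homogeneous_solution N rho f g x -> (i < N)%nat ->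
  derivable_pt_lim (fun s => positions x s i) t (velocities x t i).
Proof.
  intros Hx Hi. unfold positions, velocities. rewrite <- (RMv_even N rho f g (x t)) by auto.
  apply Hx. lia.
Qed.

Lemma D_velocities N rho f g x t i : (2 <= N)%nat -> homogeneous_solution N rho f g x ->
  (i < N)%nat ->
  derivable_pt_lim (fun s => velocities x s i) t
    (f * Pv N rho (positions x t) i + g * Pv N rho (velocities x t) i).
Proof.
  intros HN Hx Hi. unfold positions, velocities. rewrite <- (RMv_odd N rho f g (x t)) by auto.
  apply Hx. lia.
Qed.

Lemma homogeneous_decay_rho0 N f g x : (2 <= N)%nat -> f < 0 -> g < 0 ->
  homogeneous_solution N 0 f g x ->
  forall i, (i < N)%nat ->
  tends0 (fun t => positions x t i) /\ tends0 (fun t => velocities x t i).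
Proof.
  intros HN Hf Hg Hx. induction i as [|i IH]; intros Hi.
  - apply (damped_oscillator_decay f g _ _ (fun _ => 0)); auto using tends0_zero.
    + intros t. apply (D_positions N 0 f g); auto.
    + intros t. eapply D_eq; [|apply (D_velocities N 0 f g); auto].
      rewrite !Pv_rho0_0. unfold positions, velocities. ring.
  - destruct (IH ltac:(lia)) as [Hp Hq].
    apply (damped_oscillator_decay f g _ _
             (fun t => f * positions x t i + g * velocities x t i)); auto using tends0_lin.
    + intros t. apply (D_positions N 0 f g); auto.
    + intros t. eapply D_eq; [|apply (D_velocities N 0 f g); auto].
      rewrite !Pv_rho0_S. unfold positions, velocities. ring.
Qed.

Definition chain_energy N rho f g eps (x : R -> nat -> R) (s : R) : R :=
  let p := positions x s in let q := velocities x s in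
  - f * Pform N rho p p + wdot N rho q q + eps * (wdot N rho p q - g / 2 * Pform N rho p p).

Definition chain_dissipation N rho f g eps (x : R -> nat -> R) (s : R) : R :=
  let p := positions x s in let q := velocities x s in
  2 * g * Pform N rho q q + eps * (wdot N rho q q + f * Pform N rho p p).

Lemma D_chain_energy N rho f g eps x t : (2 <= N)%nat -> 0 < rho < 1 ->
  homogeneous_solution N rho f g x ->
  derivable_pt_lim (chain_energy N rho f g eps x) t (chain_dissipation N rho f g eps x t).
Proof.
  intros HN Hrho Hx.
  set (p := positions x). set (q := velocities x).
  set (q' := fun i => f * Pv N rho (p t) i + g * Pv N rho (q t) i).
  assert (Dp : forall i, (i < N)%nat -> derivable_pt_lim (fun s => p s i) t (q t i))
    by (intros; apply (D_positions N rho f g); auto).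
  assert (Dq : forall i, (i < N)%nat -> derivable_pt_lim (fun s => q s i) t (q' i))
    by (intros; apply (D_velocities N rho f g); auto).
  assert (Hq' : forall u, wdot N rho u q' = f * Pform N rho u (p t) + g * Pform N rho u (q t)).
  { intros u. unfold q'. rewrite wdot_linear_r, !wdot_Pv; auto. }
  unfold chain_energy, chain_dissipation. fold p q.
  eapply D_eq; [|apply D_plus; [apply D_plus|apply D_scal, D_minus]].
  5:{ apply D_scal, (D_Pform N rho HN p p); auto. }
  4:{ apply (D_wdot N rho p q); eauto. }
  3:{ apply (D_wdot N rho q q); eauto. }
  2:{ apply D_scal, (D_Pform N rho HN p p); auto. }
  rewrite (wdot_sym N rho q' (q t)), !Hq', (Pform_sym N rho (q t) (p t)). field.
Qed.

Lemma chain_energy_bounds f g K eps Bpp Bqq Epp Eqq Epq :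
  f < 0 -> g < 0 -> K > 0 -> 0 < eps <= 1 -> eps * K <= - g -> eps * K <= - f ->
  0 <= Bpp -> 0 <= Bqq -> 0 <= Epp -> Epp <= K * Bpp -> 0 <= Eqq -> Eqq <= K * Bqq ->
  2 * Rabs Epq <= Epp + Eqq ->
  let V := - f * Bpp + Eqq + eps * (Epq - g / 2 * Bpp) in
  - f / 2 * Bpp + Eqq / 2 <= V /\ V <= (- f - g + 2 * K) * (Bpp + Bqq) /\
  2 * g * Bqq + eps * (Eqq + f * Bpp) <= - Rmin (- g) (- eps * f) * (Bpp + Bqq).
Proof.
  intros Hf Hg HK Heps HeKg HeKf HBp HBq HEp HEpK HEq HEqK HEpq V.
  pose proof (Rle_abs Epq). pose proof (Rle_abs (- Epq)). rewrite Rabs_Ropp in *.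
  assert (eps * Rabs Epq <= Rabs Epq) by nra.
  assert (eps * Epp <= eps * (K * Bpp)) by (apply Rmult_le_compat_l; lra).
  assert (eps * Eqq <= eps * (K * Bqq)) by (apply Rmult_le_compat_l; lra).
  assert (eps * K * Bpp <= - f * Bpp) by (apply Rmult_le_compat_r; lra).
  assert (eps * K * Bqq <= - g * Bqq) by (apply Rmult_le_compat_r; lra).
  assert (0 <= - eps * g / 2 * Bpp <= - g / 2 * Bpp)
    by (split; apply Rmult_le_compat_r || apply Rmult_le_pos; nra).
  assert (Rmin (- g) (- eps * f) * Bqq <= - g * Bqq)
    by (apply Rmult_le_compat_r; [lra | apply Rmin_l]).
  assert (Rmin (- g) (- eps * f) * Bpp <= - eps * f * Bpp)
    by (apply Rmult_le_compat_r; [lra | apply Rmin_r]).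
  unfold V. split; [|split]; nra.
Qed.

Lemma coordinates_le_energy N rho a b : (2 <= N)%nat -> 0 < rho < 1 -> 0 < a -> 0 < b ->
  forall i, (i < N)%nat -> exists c, c > 0 /\ forall u v,
    c * (u i * u i) <= a * Pform N rho u u + b * wdot N rho v v /\
    c * (v i * v i) <= a * Pform N rho u u + b * wdot N rho v v.
Proof.
  intros HN Hrho Ha Hb i Hi.
  destruct (Pform_coercive N rho HN Hrho i Hi) as [K [HK HKu]].
  pose proof (Pweight_pos N rho Hrho i).
  exists (Rmin (a / K) (b * Pweight N rho i)).
  split; [apply Rmin_pos; [apply Rdiv_lt_0_compat|apply Rmult_lt_0_compat]; lra|]. intros u v.
  pose proof (Pform_nonneg N rho Hrho u). pose proof (wdot_nonneg N rho Hrho v).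
  pose proof (Rle_0_sqr (u i)). pose proof (Rle_0_sqr (v i)). unfold Rsqr in *.
  assert (0 <= a * Pform N rho u u) by (apply Rmult_le_pos; lra).
  assert (0 <= b * wdot N rho v v) by (apply Rmult_le_pos; lra).
  split.
  - apply Rle_trans with (a / K * (u i * u i)); [apply Rmult_le_compat_r, Rmin_l; lra|].
    assert (a / K * (u i * u i) <= a / K * (K * Pform N rho u u))
      by (apply Rmult_le_compat_l; [apply Rlt_le, Rdiv_lt_0_compat|]; auto).
    replace (a / K * (K * Pform N rho u u)) with (a * Pform N rho u u) in * by (field; lra).
    lra.
  - apply Rle_trans with (b * Pweight N rho i * (v i * v i));
      [apply Rmult_le_compat_r, Rmin_r; lra|].
    pose proof (wdot_ge_term N rho Hrho v i Hi).
    assert (b * (Pweight N rho i * v i * v i) <= b * wdot N rho v v)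
      by (apply Rmult_le_compat_l; lra).
    replace (b * Pweight N rho i * (v i * v i)) with (b * (Pweight N rho i * v i * v i)) by ring.
    lra.
Qed.

Lemma homogeneous_decay_pos N rho f g x : (2 <= N)%nat -> 0 < rho < 1 -> f < 0 -> g < 0 ->
  homogeneous_solution N rho f g x ->
  forall i, (i < N)%nat ->
  tends0 (fun t => positions x t i) /\ tends0 (fun t => velocities x t i).
Proof.
  intros HN Hrho Hf Hg Hx.
  set (p := positions x). set (q := velocities x).
  destruct (wdot_le_Pform N rho HN Hrho) as [K [HK HKu]].
  destruct (exists_small_coefficient (- g) (- f) K) as [eps [Heps [HeKg HeKf]]]; try lra.
  set (V := chain_energy N rho f g eps x).
  pose proof (fun t => chain_energy_bounds f g K eps _ _ _ _ _ Hf Hg HK Heps HeKg HeKf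
    (Pform_nonneg N rho Hrho (p t)) (Pform_nonneg N rho Hrho (q t))
    (wdot_nonneg N rho Hrho (p t)) (HKu (p t))
    (wdot_nonneg N rho Hrho (q t)) (HKu (q t)) (wdot_cauchy N rho Hrho (p t) (q t)))
    as Hbounds.
  cbv zeta in Hbounds.
  assert (Hlow : forall t,
            - f / 2 * Pform N rho (p t) (p t) + 1 / 2 * wdot N rho (q t) (q t) <= V t)
    by (intros t; pose proof (proj1 (Hbounds t)); unfold V, chain_energy; fold p q; lra).
  assert (HV0 : forall t, 0 <= V t).
  { intros t. pose proof (Hlow t). pose proof (Pform_nonneg N rho Hrho (p t)).
    pose proof (wdot_nonneg N rho Hrho (q t)).
    assert (0 <= - f / 2 * Pform N rho (p t) (p t)) by (apply Rmult_le_pos; lra). lra. }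
  assert (Hdecay : forall eta, eta > 0 -> exists T, forall t, t >= T -> V t < eta).
  { apply (dissipation_decay V (chain_dissipation N rho f g eps x)
      (fun t => Pform N rho (p t) (p t) + Pform N rho (q t) (q t)) (fun _ => 0)
      (Rmin (- g) (- eps * f)) (- f - g + 2 * K)); auto using tends0_zero.
    - apply Rmin_pos; nra.
    - lra.
    - intros t. apply D_chain_energy; auto.
    - intros t. apply Hbounds.
    - intros t. rewrite Rplus_0_r. apply Hbounds. }
  intros i Hi.
  destruct (coordinates_le_energy N rho (- f / 2) (1 / 2) HN Hrho ltac:(lra) ltac:(lra) i Hi)
    as [c [Hc Hcu]].
  split; apply (tends0_of_energy V _ c Hc); auto; intros t; eapply Rle_trans; try apply Hlow.
  - apply (proj1 (Hcu (p t) (q t))).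
  - apply (proj2 (Hcu (p t) (q t))).
Qed.

Lemma homogeneous_decay N rho f g x : (2 <= N)%nat -> 0 <= rho < 1 -> f < 0 -> g < 0 ->
  homogeneous_solution N rho f g x -> forall r, (r < 2 * N)%nat -> tends0 (fun t => x t r).
Proof.
  intros HN Hrho Hf Hg Hx r Hr.
  assert (Hpairs : forall i, (i < N)%nat ->
            tends0 (fun t => positions x t i) /\ tends0 (fun t => velocities x t i)).
  { destruct (Req_dec rho 0) as [->|Hne].
    - apply (homogeneous_decay_rho0 N f g); auto.
    - apply (homogeneous_decay_pos N rho f g); auto. lra. }
  destruct (Nat.Even_or_Odd r) as [[i ->]|[i ->]]; apply Hpairs; lia.
Qed.

(** * The eigenvalue problem *)

Definition Pc (N : nat) (rho : R) (x : nat -> Cx) (j : nat) : Cx :=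
  (Pv N rho (fun k => fst (x k)) j, Pv N rho (fun k => snd (x k)) j).

Lemma Pc_scal N rho c x j : Pc N rho (fun k => Cmul c (x k)) j = Cmul c (Pc N rho x j).
Proof.
  unfold Pc, Pv.
  apply Cx_eq; simpl; destruct (j =? 0)%nat; try ring; destruct (j + 1 =? N)%nat; ring.
Qed.

Lemma Pc_ext N rho x y j : (2 <= N)%nat -> (j < N)%nat ->
  (forall k, (k < N)%nat -> x k = y k) -> Pc N rho x j = Pc N rho y j.
Proof. intros HN Hj H. unfold Pc. f_equal; apply Pv_ext; auto; intros; rewrite H; auto. Qed.

Lemma Pc_explicit N rho x j :
  Pc N rho x j =
  if (j =? 0)%nat then Csub (x 0%nat) (Cmul (RtoC rho) (x 1%nat))
  else if (j + 1 =? N)%nat then Csub (x j) (x (j - 1)%nat)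
  else Csub (Csub (x j) (Cmul (RtoC (1 - rho)) (x (j - 1)%nat)))
            (Cmul (RtoC rho) (x (j + 1)%nat)).
Proof.
  unfold Pc, Pv. destruct (j =? 0)%nat; [|destruct (j + 1 =? N)%nat]; apply Cx_eq; simpl; ring.
Qed.

Lemma Mv_even N rho f g v j : (j < N)%nat -> Mv N rho f g v (2 * j)%nat = v (2 * j + 1)%nat.
Proof. intros. apply Cx_eq; rewrite ?fst_Mv, ?snd_Mv, RMv_even; auto. Qed.

Lemma Mv_odd N rho f g v j : (2 <= N)%nat -> (j < N)%nat ->
  Mv N rho f g v (2 * j + 1)%nat =
  Cadd (Cmul (RtoC f) (Pc N rho (fun k => v (2 * k)%nat) j))
       (Cmul (RtoC g) (Pc N rho (fun k => v (2 * k + 1)%nat) j)).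
Proof. intros. apply Cx_eq; rewrite ?fst_Mv, ?snd_Mv, RMv_odd; auto; simpl; ring. Qed.

Lemma Mv_scal_r N rho f g v c r :
  Mv N rho f g (fun k => Cmul (v k) c) r = Cmul (Mv N rho f g v r) c.
Proof.
  apply Cx_eq; rewrite fst_Mv || rewrite snd_Mv; simpl; rewrite fst_Mv, snd_Mv; unfold RMv;
    rewrite <- !rsum_scal_r; [rewrite <- rsum_minus | rewrite <- rsum_plus];
    apply rsum_ext; intros; simpl; ring.
Qed.

(* The vector of positions [x] and velocities [nu x], as for a solution [x e^(nu t)]. *)
Definition stack (nu : Cx) (x : nat -> Cx) : cvec :=
  fun r => if (r mod 2 =? 0)%nat then x (r / 2)%nat else Cmul nu (x (r / 2)%nat).

Lemma stack_even nu x j : stack nu x (2 * j)%nat = x j.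
Proof. unfold stack. rewrite double_mod2, double_div2. reflexivity. Qed.

Lemma stack_odd nu x j : stack nu x (2 * j + 1)%nat = Cmul nu (x j).
Proof. unfold stack. rewrite double1_mod2, double1_div2. reflexivity. Qed.

Lemma Mv_stack_odd N rho f g nu x j : (2 <= N)%nat -> (j < N)%nat ->
  Mv N rho f g (stack nu x) (2 * j + 1)%nat =
  Cmul (Cadd (RtoC f) (Cmul (RtoC g) nu)) (Pc N rho x j).
Proof.
  intros HN Hj. rewrite Mv_odd by auto.
  rewrite (Pc_ext N rho (fun k => stack nu x (2 * k)%nat) x),
    (Pc_ext N rho (fun k => stack nu x (2 * k + 1)%nat) (fun k => Cmul nu (x k))), Pc_scal
    by (auto; intros; apply stack_even || apply stack_odd).
  ring.
Qed.

Lemma Cmul_eq0_l z w : z <> C0 -> Cmul z w = C0 -> w = C0.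
Proof.
  intros Hz H. transitivity (Cmul (Cinv z) (Cmul z w)); [field; auto | rewrite H; ring].
Qed.

Lemma Pform_eq0 N rho u : (2 <= N)%nat -> 0 < rho < 1 -> Pform N rho u u = 0 ->
  forall k, (k < N)%nat -> u k = 0.
Proof.
  intros HN Hrho H0 k Hk. destruct (Pform_coercive N rho HN Hrho k Hk) as [K [_ HK]].
  specialize (HK u). rewrite H0, Rmult_0_r in HK. nra.
Qed.

Lemma wdot_ext_r N rho u v v' : (forall j, (j < N)%nat -> v j = v' j) ->
  wdot N rho u v = wdot N rho u v'.
Proof. intros H. apply rsum_ext. intros. rewrite H; auto. Qed.

Lemma wdot_scal_r N rho u c v : wdot N rho u (fun j => c * v j) = c * wdot N rho u v.
Proof. unfold wdot. rewrite <- rsum_scal_l. apply rsum_ext. intros; ring. Qed.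

Lemma kappa_sub_nu2_neq0 f g om : f < 0 -> g < 0 ->
  Csub (Cadd (RtoC f) (Cmul (RtoC g) (0, om))) (Cmul (0, om) (0, om)) <> C0.
Proof.
  intros Hf Hg E. pose proof (f_equal fst E) as E1. pose proof (f_equal snd E) as E2.
  simpl in E1, E2. assert (om = 0) by nra. subst. lra.
Qed.

(* Real and imaginary parts of [<x, (f + i c) P x>_w = lam <x, x>_w] for real [lam],
   where [<x, P x>_w] is real by symmetry of [Pform]. *)
Lemma wdot_eigen_identities N rho f c lam xr xi : (2 <= N)%nat -> 0 < rho < 1 ->
  (forall j, (j < N)%nat -> f * Pv N rho xr j + - c * Pv N rho xi j = lam * xr j) ->
  (forall j, (j < N)%nat -> f * Pv N rho xi j + c * Pv N rho xr j = lam * xi j) ->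
  f * (Pform N rho xr xr + Pform N rho xi xi) = lam * (wdot N rho xr xr + wdot N rho xi xi) /\
  c * (Pform N rho xr xr + Pform N rho xi xi) = 0.
Proof.
  intros HN Hrho Hr Hi. split.
  - transitivity (wdot N rho xr (fun j => f * Pv N rho xr j + - c * Pv N rho xi j)
                  + wdot N rho xi (fun j => f * Pv N rho xi j + c * Pv N rho xr j)).
    + rewrite !wdot_linear_r, !wdot_Pv, (Pform_sym N rho xi xr) by auto. ring.
    + rewrite (wdot_ext_r N rho xr _ _ Hr), (wdot_ext_r N rho xi _ _ Hi), !wdot_scal_r. ring.
  - transitivity (wdot N rho xr (fun j => f * Pv N rho xi j + c * Pv N rho xr j)
                  - wdot N rho xi (fun j => f * Pv N rho xr j + - c * Pv N rho xi j)).
    + rewrite !wdot_linear_r, !wdot_Pv, (Pform_sym N rho xi xr) by auto. ring.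
    + rewrite (wdot_ext_r N rho xr _ _ Hi), (wdot_ext_r N rho xi _ _ Hr), !wdot_scal_r,
        (wdot_sym N rho xi xr). ring.
Qed.

Lemma Pc_eigen_pos N rho f g om (x : nat -> Cx) :
  (2 <= N)%nat -> 0 < rho < 1 -> f < 0 -> g < 0 ->
  (forall j, (j < N)%nat ->
     Cmul (Cadd (RtoC f) (Cmul (RtoC g) (0, om))) (Pc N rho x j)
     = Cmul (Cmul (0, om) (0, om)) (x j)) ->
  forall j, (j < N)%nat -> x j = C0.
Proof.
  intros HN Hrho Hf Hg Hx.
  set (xr := fun k => fst (x k)). set (xi := fun k => snd (x k)).
  destruct (wdot_eigen_identities N rho f (g * om) (- (om * om)) xr xi HN Hrho) as [Hre Him].
  { intros j Hj. pose proof (f_equal fst (Hx j Hj)). simpl in *. unfold xr, xi. lra. }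
  { intros j Hj. pose proof (f_equal snd (Hx j Hj)). simpl in *. unfold xr, xi. lra. }
  set (B := Pform N rho xr xr + Pform N rho xi xi) in *.
  set (E := wdot N rho xr xr + wdot N rho xi xi) in *.
  assert (HB : B = 0).
  { assert (HomB : om * B = 0).
    { apply Rmult_eq_reg_l with g; [rewrite Rmult_0_r, <- Rmult_assoc; exact Him | lra]. }
    assert (HfBB : f * (B * B) = 0).
    { replace (f * (B * B)) with (f * B * B) by ring. rewrite Hre.
      replace (- (om * om) * E * B) with (- om * E * (om * B)) by ring. rewrite HomB. ring. }
    destruct (Rmult_integral _ _ HfBB) as [|HBB]; [lra|].
    destruct (Rmult_integral _ _ HBB); assumption. }
  intros j Hj. pose proof (Pform_nonneg N rho Hrho xr). pose proof (Pform_nonneg N rho Hrho xi).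
  apply Cx_eq; [apply (Pform_eq0 N rho xr) | apply (Pform_eq0 N rho xi)]; auto; unfold B in HB; lra.
Qed.

Lemma Pc_eigen_rho0 N f g om (x : nat -> Cx) : f < 0 -> g < 0 ->
  (forall j, (j < N)%nat ->
     Cmul (Cadd (RtoC f) (Cmul (RtoC g) (0, om))) (Pc N 0 x j)
     = Cmul (Cmul (0, om) (0, om)) (x j)) ->
  forall j, (j < N)%nat -> x j = C0.
Proof.
  intros Hf Hg Hx. pose proof (kappa_sub_nu2_neq0 f g om Hf Hg) as Hk.
  set (kappa := Cadd (RtoC f) (Cmul (RtoC g) (0, om))) in *.
  set (nu2 := Cmul (0, om) (0, om)) in *.
  induction j as [|j IH]; intros Hj; apply (Cmul_eq0_l _ _ Hk).
  - transitivity (Csub (Cmul kappa (Pc N 0 x 0)) (Cmul nu2 (x 0%nat))).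
    + replace (Pc N 0 x 0) with (x 0%nat) by (apply Cx_eq; symmetry; apply Pv_rho0_0). ring.
    + rewrite Hx by lia. ring.
  - transitivity (Csub (Cmul kappa (Pc N 0 x (S j))) (Cmul nu2 (x (S j)))).
    + replace (Pc N 0 x (S j)) with (Csub (x (S j)) (x j))
        by (apply Cx_eq; symmetry; apply Pv_rho0_S).
      rewrite IH by lia. ring.
    + rewrite Hx by lia. ring.
Qed.

Lemma no_eigenvalue N rho f g om (v : cvec) : (2 <= N)%nat -> 0 <= rho < 1 -> f < 0 -> g < 0 ->
  (forall r, (r < 2 * N)%nat -> Mv N rho f g v r = Cmul (0, om) (v r)) ->
  forall r, (r < 2 * N)%nat -> v r = C0.
Proof.
  intros HN Hrho Hf Hg Hv.
  assert (Hvel : forall j, (j < N)%nat -> v (2 * j + 1)%nat = Cmul (0, om) (v (2 * j)%nat)).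
  { intros j Hj. rewrite <- (Mv_even N rho f g v j Hj). apply Hv. lia. }
  set (x := fun k => v (2 * k)%nat).
  assert (Heig : forall j, (j < N)%nat ->
    Cmul (Cadd (RtoC f) (Cmul (RtoC g) (0, om))) (Pc N rho x j)
    = Cmul (Cmul (0, om) (0, om)) (x j)).
  { intros j Hj. pose proof (Hv (2 * j + 1)%nat ltac:(lia)) as E.
    rewrite Mv_odd in E by auto. fold x in E.
    rewrite (Pc_ext N rho (fun k => v (2 * k + 1)%nat) (fun k => Cmul (0, om) (x k))), Pc_scal,
      Hvel in E by auto.
    transitivity (Cadd (Cmul (RtoC f) (Pc N rho x j))
                       (Cmul (RtoC g) (Cmul (0, om) (Pc N rho x j)))); [ring|].
    rewrite E. unfold x. ring. }
  assert (Hx : forall j, (j < N)%nat -> x j = C0).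
  { destruct (Req_dec rho 0) as [->|Hne].
    - apply (Pc_eigen_rho0 N f g om); auto.
    - apply (Pc_eigen_pos N rho f g om); auto. lra. }
  intros r Hr. destruct (Nat.Even_or_Odd r) as [[j ->]|[j ->]].
  - apply Hx. lia.
  - rewrite Hvel by lia. change (v (2 * j)%nat) with (x j). rewrite Hx by lia.
    apply Cx_eq; simpl; ring.
Qed.

(** * The particular solution [a(nu)] *)

Fixpoint backward_pair (lam kap kr ko : Cx) (k : nat) : Cx * Cx :=
  match k with
  | O => (C1, Cdiv lam kap)
  | S k' => let p := backward_pair lam kap kr ko k' in
            (snd p, Cdiv (Csub (Cmul lam (snd p)) (Cmul kr (fst p))) ko)
  end.

(* The solution of rows [1 .. N-1] of [(kap P - nu2) y = 0] normalised by [y (N-1) = 1],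
   computed from the last row upwards. *)
Definition backward_solution (N : nat) (rho : R) (kap nu2 : Cx) (j : nat) : Cx :=
  fst (backward_pair (Csub kap nu2) kap (Cmul kap (RtoC rho)) (Cmul kap (RtoC (1 - rho)))
         (N - 1 - j)).

Lemma backward_solution_rows N rho kap nu2 : kap <> C0 -> rho <> 1 ->
  forall j, (1 <= j < N)%nat ->
  Csub (Cmul kap (Pc N rho (backward_solution N rho kap nu2) j))
       (Cmul nu2 (backward_solution N rho kap nu2 j)) = C0.
Proof.
  intros Hk Hrho j Hj. assert (Ho : RtoC (1 - rho) <> C0) by (apply RtoC_neq0; lra).
  rewrite Pc_explicit. destruct (Nat.eqb_spec j 0); [lia|].
  unfold backward_solution. destruct (Nat.eqb_spec (j + 1) N).
  - replace (N - 1 - j)%nat with 0%nat by lia. replace (N - 1 - (j - 1))%nat with 1%nat by lia.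
    simpl. field. auto.
  - destruct (N - 1 - j)%nat as [|k] eqn:Ek; [lia|].
    replace (N - 1 - (j - 1))%nat with (S (S k)) by lia.
    replace (N - 1 - (j + 1))%nat with k by lia.
    simpl. field. auto.
Qed.

(* Row 0 of the backward solution has a nonzero residual (otherwise it would stack to an
   eigenvector), so rescaling it hits any right-hand side [c e_0]. *)
Lemma resolvent_rows N rho f g om (c : Cx) : (2 <= N)%nat -> 0 <= rho < 1 -> f < 0 -> g < 0 ->
  exists x : nat -> Cx, forall j, (j < N)%nat ->
    Csub (Cmul (Cadd (RtoC f) (Cmul (RtoC g) (0, om))) (Pc N rho x j))
         (Cmul (Cmul (0, om) (0, om)) (x j)) = if (j =? 0)%nat then c else C0.
Proof.
  intros HN Hrho Hf Hg.
  set (kap := Cadd (RtoC f) (Cmul (RtoC g) (0, om))). set (nu2 := Cmul (0, om) (0, om)).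
  assert (Hk : kap <> C0) by (intros E; apply (f_equal fst) in E; simpl in E; lra).
  set (y := backward_solution N rho kap nu2).
  pose proof (backward_solution_rows N rho kap nu2 Hk ltac:(lra)) as Hrows. fold y in Hrows.
  set (L := Csub (Cmul kap (Pc N rho y 0)) (Cmul nu2 (y 0%nat))).
  assert (HL : L <> C0).
  { intros EL.
    assert (Heig : forall r, (r < 2 * N)%nat ->
              Mv N rho f g (stack (0, om) y) r = Cmul (0, om) (stack (0, om) y r)).
    { intros r Hr. destruct (Nat.Even_or_Odd r) as [[i ->]|[i ->]].
      - rewrite Mv_even, stack_even, stack_odd by lia. reflexivity.
      - rewrite Mv_stack_odd, stack_odd by lia. fold kap.
        transitivity (Cadd (Csub (Cmul kap (Pc N rho y i)) (Cmul nu2 (y i))) (Cmul nu2 (y i)));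
          [ring|].
        destruct (Nat.eq_dec i 0) as [->|Hi].
        + fold L. rewrite EL. unfold nu2. ring.
        + rewrite Hrows by lia. unfold nu2. ring. }
    pose proof (no_eigenvalue N rho f g om _ HN Hrho Hf Hg Heig (2 * (N - 1))%nat ltac:(lia))
      as E.
    rewrite stack_even in E. unfold y, backward_solution in E. rewrite Nat.sub_diag in E.
    exact (C1_neq_C0 E). }
  exists (fun j => Cmul (Cdiv c L) (y j)). intros j Hj. rewrite Pc_scal.
  transitivity (Cmul (Cdiv c L) (Csub (Cmul kap (Pc N rho y j)) (Cmul nu2 (y j)))); [ring|].
  destruct (Nat.eqb_spec j 0) as [->|Hj0].
  - fold L. field. exact HL.
  - rewrite Hrows by lia. ring.
Qed.

Lemma particular_solution N rho f g om : (2 <= N)%nat -> 0 <= rho < 1 -> f < 0 -> g < 0 ->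
  exists a : cvec, forall r, (r < 2 * N)%nat ->
    Csub (Mv N rho f g a r) (Cmul (0, om) (a r)) = Copp (g0 rho f g (0, om) r).
Proof.
  intros HN Hrho Hf Hg.
  destruct (resolvent_rows N rho f g om
              (Cmul (RtoC (1 - rho)) (Cadd (RtoC f) (Cmul (RtoC g) (0, om)))) HN Hrho Hf Hg)
    as [x Hx].
  exists (stack (0, om) x). intros r Hr. destruct (Nat.Even_or_Odd r) as [[j ->]|[j ->]].
  - rewrite Mv_even, stack_odd, stack_even by lia. unfold g0, e2.
    destruct (Nat.eqb_spec (2 * j) 1); [lia|]. apply Cx_eq; simpl; ring.
  - rewrite Mv_stack_odd, stack_odd by lia.
    transitivity (Csub (Cmul (Cadd (RtoC f) (Cmul (RtoC g) (0, om))) (Pc N rho x j))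
                       (Cmul (Cmul (0, om) (0, om)) (x j))); [ring|].
    rewrite Hx by lia. unfold g0, e2.
    destruct (Nat.eqb_spec j 0) as [->|Hj];
      [|destruct (Nat.eqb_spec (2 * j + 1) 1); [lia|]]; apply Cx_eq; simpl; ring.
Qed.

(** * Convergence to the forced oscillation *)

Lemma Mv_sub N rho f g v w r :
  Mv N rho f g (fun k => Csub (v k) (w k)) r = Csub (Mv N rho f g v r) (Mv N rho f g w r).
Proof.
  apply Cx_eq; [rewrite fst_Csub, !fst_Mv | rewrite snd_Csub, !snd_Mv]; unfold RMv;
    rewrite <- rsum_minus; apply rsum_ext; intros; simpl; ring.
Qed.

Lemma Cexp_imag om t : Cexp (Cmul (RtoC t) (0, om)) = (cos (om * t), sin (om * t)).
Proof.
  unfold Cexp. simpl. replace (t * 0 - 0 * om) with 0 by ring.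
  replace (t * om + 0 * 0) with (om * t) by ring. rewrite exp_0. f_equal; ring.
Qed.

Lemma D_rotation w om t :
  derivable_pt_lim (fun s => fst (Cmul w (cos (om * s), sin (om * s)))) t
    (fst (Cmul (0, om) (Cmul w (cos (om * t), sin (om * t))))) /\
  derivable_pt_lim (fun s => snd (Cmul w (cos (om * s), sin (om * s)))) t
    (snd (Cmul (0, om) (Cmul w (cos (om * t), sin (om * t))))).
Proof.
  pose proof (D_comp_scal cos (fun x => - sin x) om t (derivable_pt_lim_cos _)) as Dc.
  pose proof (D_comp_scal sin cos om t (derivable_pt_lim_sin _)) as Ds.
  cbv beta in Dc. simpl.
  split; eapply D_eq; try (apply D_minus || apply D_plus); try apply D_scal; eauto; ring.
Qed.

Lemma Cmod_lt z e : Rabs (fst z) < e / 2 -> Rabs (snd z) < e / 2 -> Cmod z < e.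
Proof.
  intros Hx Hy. pose proof (Rabs_pos (fst z)). pose proof (Rabs_pos (snd z)).
  unfold Cmod. rewrite <- (sqrt_pow2 e) by lra. apply sqrt_lt_1.
  - pose proof (pow2_ge_0 (fst z)); pose proof (pow2_ge_0 (snd z)); lra.
  - apply pow2_ge_0.
  - rewrite <- (pow2_abs (fst z)), <- (pow2_abs (snd z)). simpl. nra.
Qed.

Lemma solution_error_homogeneous N rho f g om (a : cvec) (z : R -> cvec) :
  (forall r, (r < 2 * N)%nat ->
     Csub (Mv N rho f g a r) (Cmul (0, om) (a r)) = Copp (g0 rho f g (0, om) r)) ->
  is_solution N rho f g (0, om) z ->
  let err := fun t r => Csub (z t r) (Cmul (a r) (cos (om * t), sin (om * t))) in
  homogeneous_solution N rho f g (fun t r => fst (err t r)) /\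
  homogeneous_solution N rho f g (fun t r => snd (err t r)).
Proof.
  intros Ha Hz err.
  assert (Hkey : forall t r, (r < 2 * N)%nat ->
    Csub (Cadd (Mv N rho f g (z t) r) (Gamma0 rho f g (0, om) t r))
         (Cmul (0, om) (Cmul (a r) (cos (om * t), sin (om * t))))
    = Mv N rho f g (err t) r).
  { intros t r Hr. unfold err. rewrite Mv_sub, Mv_scal_r.
    replace (Mv N rho f g a r) with (Csub (Cmul (0, om) (a r)) (g0 rho f g (0, om) r)).
    - unfold Gamma0. rewrite Cexp_imag. ring.
    - transitivity (Cadd (Csub (Mv N rho f g a r) (Cmul (0, om) (a r))) (Cmul (0, om) (a r)));
        [rewrite Ha by auto|]; ring. }
  split; intros r Hr t; destruct (Hz r Hr t) as [Dre Dim];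
    destruct (D_rotation (a r) om t) as [Rre Rim].
  - eapply D_eq; [|apply (D_minus _ _ _ _ _ Dre Rre)].
    rewrite <- fst_Mv, <- Hkey by auto. simpl. ring.
  - eapply D_eq; [|apply (D_minus _ _ _ _ _ Dim Rim)].
    rewrite <- snd_Mv, <- Hkey by auto. simpl. ring.
Qed.

Theorem mainTheorem3 (N : nat) (rho f g : R) (nu : Cx)
  (HN : (2 <= N)%nat) (Hrho : 0 <= rho < 1) (Hf : f < 0) (Hg : g < 0)
  (Hnu : fst nu = 0) :
  ~ is_eigenvalue N rho f g nu /\
  exists a : cvec,
    (forall r, (r < 2 * N)%nat ->
       Csub (Mv N rho f g a r) (Cmul nu (a r)) = Copp (g0 rho f g nu r)) /\
    (forall z : R -> cvec, is_solution N rho f g nu z ->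
       forall r, (r < 2 * N)%nat ->
       forall eps : R, eps > 0 -> exists T : R, forall t : R, t >= T ->
         Cmod (Csub (z t r) (Cmul (a r) (Cexp (Cmul (RtoC t) nu)))) < eps).
Proof.
  destruct nu as [re om]. simpl in Hnu. subst re. split.
  - intros [v [[r [Hr Hvr]] Hv]].
    exact (Hvr (no_eigenvalue N rho f g om v HN Hrho Hf Hg Hv r Hr)).
  - destruct (particular_solution N rho f g om HN Hrho Hf Hg) as [a Ha].
    exists a. split; [exact Ha|]. intros z Hz r Hr eps Heps.
    destruct (solution_error_homogeneous N rho f g om a z Ha Hz) as [Hre Him].
    destruct (homogeneous_decay N rho f g _ HN Hrho Hf Hg Hre r Hr (eps / 2)) as [T1 H1]; [lra|].
    destruct (homogeneous_decay N rho f g _ HN Hrho Hf Hg Him r Hr (eps / 2)) as [T2 H2]; [lra|].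
    exists (Rmax T1 T2). intros t Ht. rewrite Cexp_imag.
    pose proof (Rmax_l T1 T2). pose proof (Rmax_r T1 T2).
    apply Cmod_lt; [apply H1 | apply H2]; lra.
Qed.
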